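(* Let $\mathcal A$ be a unital $C^*$-algebra, $p,q\in\mathcal A$ projections, $a\in\mathcal A$ invertible up to $(p,q)$, and $b$ a $(p,q)$-inverse of $a$. (a) For every $c\in\mathcal A$ with $\|c\|<\|b\|^{-1}$, the element $a+c$ is invertible up to $(p,q)$, and its $(p,q)$-inverse $b_1$ satisfies $\|b_1\|\le \dfrac{\|b\|}{1-\|b\|\,\|c\|}$. (b) Let $C=2\bigl(1+\sum_{n\ge1}|\alpha_n|2^{-(n-1)}\bigr)$, where $\alpha_n$ are the Taylor coefficients of $t\mapsto(1+t)^{-1/2}$ at $0$. If $p',q'\in\mathcal A$ are projections with $\|p-p'\|,\|q-q'\|<\min\{1/2,\,1/(4C\|a\|\,\|b\|)\}$, then $a$ is invertible up to $(p',q')$, and its $(p',q')$-inverse $b'$ satisfies $\|b'\|\le 2\|b\|$.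
   Context: For $a\in\mathcal A$ and projections $p,q$ in a unital $C^*$-algebra $\mathcal A$, $a$ is invertible up to $(p,q)$ if there is $b\in\mathcal A$ with $b=(1-p)b(1-q)$, $(1-q)a(1-p)b=1-q$ and $b(1-q)a(1-p)=1-p$; such $b$ is called a $(p,q)$-inverse of $a$ (it is unique). The constant $C$ is the one for which, for any projections $P,Q$ with $\|P-Q\|<1/2$, there is a unitary $U\in C^*(I,P,Q)$ with $U^*PU=Q$ and $\|I-U\|\le C\|P-Q\|$. *)

From HB Require Import structures.
From mathcomp Require Import all_boot all_order all_algebra.
From mathcomp Require Import all_classical all_reals all_analysis.
From mathcomp.real_closed Require Import complex.
Set Implicit Arguments. Unset Strict Implicit. Unset Printing Implicit Defensive.
Import Order.TTheory GRing.Theory Num.Theory.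
Local Open Scope ring_scope.

Record is_Cstar (R : realType) (A : algType R[i]) (nrm : A -> R) (st : A -> A)
  : Prop := IsCstar {
  cs_norm_ge0 : forall x, 0 <= nrm x;
  cs_norm_eq0 : forall x, nrm x = 0 -> x = 0;
  cs_norm_triangle : forall x y, nrm (x + y) <= nrm x + nrm y;
  cs_norm_scale : forall (l : R[i]) x, nrm (l *: x) = ComplexField.Normc.normc l * nrm x;
  cs_norm_submul : forall x y, nrm (x * y) <= nrm x * nrm y;
  cs_complete : forall u : nat -> A,
      (forall e : R, 0 < e -> exists N : nat, forall m n : nat,
          (N <= m)%N -> (N <= n)%N -> nrm (u m - u n) < e) ->
      exists l : A, forall e : R, 0 < e -> exists N : nat, forall n : nat,
          (N <= n)%N -> nrm (u n - l) < e;
  cs_star_add : forall x y, st (x + y) = st x + st y;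
  cs_star_scale : forall (l : R[i]) x, st (l *: x) = conjc l *: st x;
  cs_star_mul : forall x y, st (x * y) = st y * st x;
  cs_star_invol : forall x, st (st x) = x;
  cs_cstar_id : forall x, nrm (st x * x) = nrm x ^+ 2
}.

Definition is_proj (R : realType) (A : algType R[i]) (st : A -> A) (p : A) : Prop :=
  st p = p /\ p * p = p.

Definition pq_inverse (R : realType) (A : algType R[i]) (p q a b : A) : Prop :=
  [/\ b = (1 - p) * b * (1 - q),
      (1 - q) * a * (1 - p) * b = 1 - q &
      b * (1 - q) * a * (1 - p) = 1 - p].

Definition invertible_upto (R : realType) (A : algType R[i]) (p q a : A) : Prop :=
  exists b, pq_inverse p q a b.

(* alpha n : the n-th Taylor coefficient of t |-> (1+t)^(-1/2) at 0, i.e. the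
   generalized binomial coefficient binom(-1/2, n). *)
Definition alpha (R : realType) (n : nat) : R :=
  \prod_(k < n) ((- (1 / 2) - k%:R) / (k.+1)%:R).

Definition Cconst (R : realType) : R :=
  2 * (1 + limn (fun N : nat => \sum_(1 <= n < N) `|alpha R n| / 2 ^+ (n - 1))).

From HB Require Import structures.
From mathcomp Require Import all_boot all_order all_algebra.
From mathcomp Require Import all_classical all_reals all_analysis.
From mathcomp.real_closed Require Import complex.
From mathcomp Require Import ring lra.
Set Implicit Arguments. Unset Strict Implicit. Unset Printing Implicit Defensive.
Import Order.TTheory GRing.Theory Num.Theory numFieldNormedType.Exports.
Local Open Scope ring_scope.
Local Open Scope classical_set_scope.

(* Part (a) is a Neumann-series argument: with [c' = (1 - q) c (1 - p)], the
   element [(1 + b c')^-1 b] is the (p,q)-inverse of [a + c]; the push-through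
   identity [(1 + b c')^-1 b = b (1 + c' b)^-1] yields its second equation.
   For part (b), [Z = (1 - p) (1 - p') + p p'] satisfies [Z (1 - p') = (1 - p) Z]
   and [|Z - 1| <= 2 |p - p'|], so it is invertible; conjugating by such [Zp]
   and [Zq] reduces (b) to (a) for the perturbation [Zq a Zp^-1 - a]. This
   similarity replaces the unitary of the paper: the constant [C] only enters
   through [C >= 7/2] (its series summed up to [n = 3]), which gives
   [|a| |b| |p - p'| < 1/14] and hence the bound [2 |b|]. As [b = b a b], either
   [b = 0] or [|a| |b| >= 1]. *)

Lemma subr1_mul_sumX (T : pzRingType) (x : T) n :
  (1 - x) * \sum_(i < n) x ^+ i = 1 - x ^+ n.
Proof. by rewrite -[1 - x]opprB mulNr -subrX1 opprB. Qed.

Lemma geometric_tail_le (R : realFieldType) (r : R) (n m : nat) :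
  0 <= r -> r < 1 -> \sum_(n <= i < m) r ^+ i <= r ^+ n / (1 - r).
Proof.
move=> r_ge0 r_lt1; have r1_gt0 : 0 < 1 - r by rewrite subr_gt0.
have rn_ge0 := exprn_ge0 n r_ge0.
case: (leqP n m) => [nm|/ltnW mn]; last by rewrite big_geq // divr_ge0 // ltW.
rewrite -{1}(add0n n) big_addn.
under eq_bigr do rewrite exprD mulrC.
rewrite -mulr_sumr ler_wpM2l // big_mkord -div1r ler_pdivlMr // mulrC.
by rewrite subr1_mul_sumX lerBlDr lerDl exprn_ge0.
Qed.

Lemma similarity_estimate (R : realFieldType) (alp bet x1 x2 w z gam : R) :
  0 <= bet -> bet <= alp * bet ^+ 2 ->
  0 <= x1 -> 0 <= x2 -> x1 < 1 ->
  7 * (alp * bet) * x1 < 1 -> 7 * (alp * bet) * x2 < 1 ->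
  0 <= w -> w <= (1 - x1)^-1 -> z <= 1 + x2 ->
  gam <= alp * (x1 + x2) * w ->
  bet * gam < 1 /\ w * (bet / (1 - bet * gam)) * z <= 2 * bet.
Proof.
move=> bet_ge0 bet_le x1_ge0 x2_ge0 x1_lt1 small1 small2 w_ge0 w_le z_le gam_le.
have [->|bet_neq0] := eqVneq bet 0; first by rewrite !mul0r mulr0 mul0r.
have bet_gt0 : 0 < bet by rewrite lt_neqAle eq_sym bet_neq0.
have eta_ge1 : 1 <= alp * bet.
  by rewrite -(ler_pM2l bet_gt0) mulr1 mulrCA -expr2.
have w_le76 : w <= 7 / 6.
  have : w * (1 - x1) <= 1 by rewrite -ler_pdivlMr ?subr_gt0 // div1r.
  nra.
have betgam_le : bet * gam <= alp * bet * (x1 + x2) * w.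
  have := ler_wpM2l bet_ge0 gam_le; rewrite !mulrA [bet * alp]mulrC; exact.
have betgam_lt1 : bet * gam < 1 by nra.
split => //.
have x2_small : x2 < 1 / 7 by nra.
have wz_le : w * z <= w * (1 + x2) by exact: ler_wpM2l.
have wK_le : w * (1 + x2) + 2 * (alp * bet * (x1 + x2) * w) <= 2.
  have K_le : 1 + x2 + 2 * (alp * bet) * (x1 + x2) <= 12 / 7 by nra.
  have K_ge0 : 0 <= 1 + x2 + 2 * (alp * bet) * (x1 + x2) by nra.
  have -> : w * (1 + x2) + 2 * (alp * bet * (x1 + x2) * w)
      = w * (1 + x2 + 2 * (alp * bet) * (x1 + x2)) by ring.
  have := ler_wpM2r K_ge0 w_le76; lra.
have : w * z <= 2 * (1 - bet * gam).
  rewrite mulrBr mulr1 lerBrDr; apply: le_trans wK_le.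
  by rewrite lerD // ler_wpM2l.
rewrite -ler_pdivrMr ?subr_gt0 // => wz_div_le.
have -> : w * (bet / (1 - bet * gam)) * z = w * z / (1 - bet * gam) * bet by ring.
by rewrite ler_pM2r.
Qed.

Lemma alpha_le1 (R : realType) n : `|alpha R n| <= 1.
Proof.
rewrite /alpha; elim/big_ind: _ => [|x y|i _]; first by rewrite normr1.
  by rewrite normrM => x_le1 y_le1; rewrite -[1]mulr1 ler_pM.
rewrite normrM normfV -opprD normrN !ger0_norm ?ler0n ?addr_ge0 //.
rewrite ler_pdivrMr ?ltr0Sn // mul1r.
have -> : i.+1%:R = i%:R + 1 :> R by rewrite -natr1.
have : (0 : R) <= i%:R by [].
lra.
Qed.

Lemma Cconst_ge (R : realType) : 7 / 2 <= Cconst R.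
Proof.
pose u N : R := \sum_(1 <= n < N) `|alpha R n| / 2 ^+ (n - 1).
have u_nd : nondecreasing_seq u.
  apply/nondecreasing_seqP => N; rewrite /u.
  case: N => [|N]; first by rewrite !big_geq.
  by rewrite [X in _ <= X]big_nat_recr //= lerDl divr_ge0 // exprn_ge0.
have u_le2 N : u N <= 2.
  apply: (le_trans (y := \sum_(1 <= n < N) 2 * 2^-1 ^+ n)).
    apply: ler_sum_nat => -[//|n] _; rewrite subn1 /= exprVn exprS invfM mulrA.
    by rewrite divff // ler_pM2r ?alpha_le1 // invr_gt0 exprn_gt0.
  rewrite -mulr_sumr -[X in _ <= X]mulr1 ler_pM2l //.
  have half_lt1 : (2^-1 : R) < 1 by rewrite invf_lt1 // ltr1n.
  apply: le_trans (geometric_tail_le 1 N _ half_lt1) _ => //.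
  have half2 : (2^-1 : R) * 2 = 1 by rewrite mulVf.
  by rewrite expr1 ler_pdivrMr ?subr_gt0 // mul1r; lra.
have u_cvg : cvgn u.
  by apply: nondecreasing_is_cvgn => //; exists 2 => _ [n _ <-]; exact: u_le2.
have := nondecreasing_cvgn_le u_nd u_cvg 4.
have -> : u 4 = 49 / 64.
  rewrite /u big_nat_recr //= big_nat_recr //= big_nat_recr //= big_geq //.
  have [-> -> ->] : [/\ alpha R 1 = - (1 / 2), alpha R 2 = 3 / 8 & alpha R 3 = - (5 / 16)].
    by rewrite /alpha !big_ord_recr !big_ord0 /=; split; field.
  rewrite !normrN !ger0_norm // !subSS !subn0 expr0 expr1 expr2 add0r.
  by field.
by rewrite /Cconst -/u; lra.
Qed.

Lemma idem_subr (T : pzRingType) (x : T) : x * x = x -> (1 - x) * (1 - x) = 1 - x.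
Proof. by move=> xx; rewrite mulrBl mul1r mulrBr mulr1 xx subrr subr0. Qed.

Lemma push_through (T : pzRingType) (x y u v : T) :
  u * (1 + x * y) = 1 -> (1 + y * x) * v = 1 -> u * x = x * v.
Proof.
move=> uK Kv.
have x_comm : x * (1 + y * x) = (1 + x * y) * x.
  by rewrite mulrDr mulrDl mulr1 mul1r mulrA.
by rewrite -[u * x]mulr1 -Kv mulrA -(mulrA u) x_comm mulrA uK mul1r.
Qed.

Definition proj_intertwiner (T : pzRingType) (p p' : T) : T :=
  (1 - p) * (1 - p') + p * p'.

Section Intertwiner.
Variables (T : pzRingType) (p p' : T).
Hypothesis pp : p * p = p.

Lemma proj_intertwinerC : p' * p' = p' ->
  proj_intertwiner p p' * (1 - p') = (1 - p) * proj_intertwiner p p'.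
Proof.
move=> pp'; rewrite /proj_intertwiner.
have p'C : p' * (1 - p') = 0 by rewrite mulrBr mulr1 pp' subrr.
have Cp : (1 - p) * p = 0 by rewrite mulrBl mul1r pp subrr.
rewrite mulrDl [RHS]mulrDr -!mulrA idem_subr // p'C mulr0 addr0.
by rewrite !mulrA idem_subr // Cp mul0r addr0.
Qed.

Lemma proj_intertwiner_subr1 :
  proj_intertwiner p p' - 1 = (1 - p) * (p - p') + p * (p' - p).
Proof.
have e1 : 1 - p' = (1 - p) + (p - p') by rewrite addrA subrK.
have e2 : p' = p + (p' - p) by rewrite addrC subrK.
rewrite /proj_intertwiner e1 {2}e2 [(1 - p) * _]mulrDr [p * _]mulrDr.
by rewrite idem_subr // pp addrACA subrK addrAC subrr add0r.
Qed.

End Intertwiner.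

Section PqInverse.
Variables (R : realType) (A : algType R[i]) (p q : A).
Hypotheses (pp : p * p = p) (qq : q * q = q).

Lemma pq_inverse_projl a b : pq_inverse p q a b -> (1 - p) * b = b.
Proof. by case=> b_eq _ _; rewrite b_eq !mulrA idem_subr. Qed.

Lemma pq_inverse_projr a b : pq_inverse p q a b -> b * (1 - q) = b.
Proof. by case=> b_eq _ _; rewrite b_eq -!mulrA idem_subr. Qed.

Lemma pq_inverse_unique a b1 b2 :
  pq_inverse p q a b1 -> pq_inverse p q a b2 -> b1 = b2.
Proof.
move=> ab1 ab2; have [_ ab2_r _] := ab2; have [_ _ ab1_l] := ab1.
rewrite -(pq_inverse_projr ab1) -ab2_r !mulrA ab1_l.
exact: pq_inverse_projl ab2.
Qed.

Lemma pq_inverse_outer a b : pq_inverse p q a b -> b * a * b = b.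
Proof.
move=> ab; have [_ _ ab_l] := ab.
rewrite -{1}(pq_inverse_projr ab) -{2}(pq_inverse_projl ab) !mulrA ab_l.
exact: pq_inverse_projl ab.
Qed.

End PqInverse.

Lemma pq_inverse_conj (R : realType) (A : algType R[i]) (p q p' q' a b Zp Wp Zq Wq : A) :
  Wp * Zp = 1 -> Zp * Wp = 1 -> Wq * Zq = 1 ->
  Zp * (1 - p') = (1 - p) * Zp -> Zq * (1 - q') = (1 - q) * Zq ->
  pq_inverse p q (Zq * a * Wp) b -> pq_inverse p' q' a (Wp * b * Zq).
Proof.
move=> WZp ZWp WZq Zp_int Zq_int [b_eq ab_r ab_l].
have P'E : 1 - p' = Wp * (1 - p) * Zp by rewrite -mulrA -Zp_int mulrA WZp mul1r.
have Q'E : 1 - q' = Wq * (1 - q) * Zq by rewrite -mulrA -Zq_int mulrA WZq mul1r.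
have P'W : (1 - p') * Wp = Wp * (1 - p) by rewrite P'E -[_ * Zp * Wp]mulrA ZWp mulr1.
split.
- have -> : (1 - p') * (Wp * b * Zq) * (1 - q') = Wp * ((1 - p) * b * (1 - q)) * Zq.
    by rewrite !mulrA P'W -!mulrA Zq_int !mulrA.
  by rewrite -b_eq.
- rewrite {1}Q'E !mulrA -(mulrA _ (1 - p')) P'W.
  have -> : Wq * (1 - q) * Zq * a * (Wp * (1 - p)) * b * Zq
      = Wq * ((1 - q) * (Zq * a * Wp) * (1 - p) * b) * Zq by rewrite !mulrA.
  by rewrite ab_r -Q'E.
- rewrite -(mulrA _ Zq) Zq_int {1}P'E.
  have -> : Wp * b * ((1 - q) * Zq) * a * (Wp * (1 - p) * Zp)
      = Wp * (b * (1 - q) * (Zq * a * Wp) * (1 - p)) * Zp by rewrite !mulrA.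
  by rewrite ab_l -P'E.
Qed.

Section CstarAlgebra.
Variables (R : realType) (A : algType R[i]) (nrm : A -> R) (st : A -> A).
Hypothesis HA : is_Cstar nrm st.

Let nrm_ge0 := cs_norm_ge0 HA.
Let nrm_triangle := cs_norm_triangle HA.
Let nrm_submul := cs_norm_submul HA.

Lemma nrm0 : nrm 0 = 0.
Proof.
have := cs_norm_scale HA 0 0; rewrite scale0r => ->.
by rewrite ComplexField.Normc.normc0 mul0r.
Qed.

Lemma nrmN x : nrm (- x) = nrm x.
Proof.
rewrite -scaleN1r (cs_norm_scale HA).
by rewrite (normcN 1) ComplexField.Normc.normc1 mul1r.
Qed.

Lemma nrm_distC x y : nrm (x - y) = nrm (y - x).
Proof. by rewrite -nrmN opprB. Qed.

Lemma nrm_sub_le x y : nrm (x - y) <= nrm x + nrm y.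
Proof. by rewrite -(nrmN y); exact: nrm_triangle. Qed.

Lemma nrm_sum_le (I : Type) (r : seq I) (P : pred I) (F : I -> A) :
  nrm (\sum_(i <- r | P i) F i) <= \sum_(i <- r | P i) nrm (F i).
Proof.
apply: (big_ind2 (fun x y => nrm x <= y)) => [|x1 x2 y1 y2 le1 le2|//].
  by rewrite nrm0.
by apply: (le_trans (nrm_triangle _ _)); exact: lerD.
Qed.

Lemma star0 : st 0 = 0.
Proof.
have := cs_star_add HA 0 0; rewrite addr0 => st0.
by apply: (addrI (st 0)); rewrite addr0 -st0.
Qed.

Lemma starN x : st (- x) = - st x.
Proof.
have := cs_star_add HA x (- x); rewrite subrr star0 => /esym/eqP.
by rewrite addrC addr_eq0 => /eqP.
Qed.

Lemma star1 : st 1 = 1.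
Proof.
have := cs_star_mul HA (st 1) 1.
by rewrite mulr1 (cs_star_invol HA) mulr1.
Qed.

Lemma projC p : is_proj st p -> is_proj st (1 - p).
Proof.
move=> [st_p pp]; split; first by rewrite (cs_star_add HA) starN star1 st_p.
by rewrite mulrBl mul1r mulrBr mulr1 pp subrr subr0.
Qed.

Lemma nrm_proj p : is_proj st p -> nrm p = 0 \/ nrm p = 1.
Proof.
move=> [st_p pp]; have := cs_cstar_id HA p; rewrite st_p pp expr2 => nrm_p.
have /eqP : nrm p * (nrm p - 1) = 0 by rewrite mulrBr mulr1 -nrm_p subrr.
by rewrite mulf_eq0 subr_eq0 => /orP[] /eqP; [left|right].
Qed.

Lemma nrm_proj_le1 p : is_proj st p -> nrm p <= 1.
Proof. by case/nrm_proj=> ->. Qed.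

Lemma nrm1_le1 : nrm 1 <= 1.
Proof. by apply: nrm_proj_le1; split; [exact: star1 | rewrite mulr1]. Qed.

Lemma nrm_expr_le y n : nrm (y ^+ n) <= nrm y ^+ n.
Proof.
elim: n => [|n IHn]; first by rewrite !expr0 nrm1_le1.
by rewrite !exprS; apply: (le_trans (nrm_submul _ _)); exact: ler_wpM2l.
Qed.

Lemma eq0_nrm_vanishing x (u : nat -> R) :
  u @ \oo --> 0 -> (forall n, nrm x <= u n) -> x = 0.
Proof.
move=> u0 x_le; apply: (cs_norm_eq0 HA); apply/eqP; rewrite eq_le nrm_ge0 andbT.
by apply: (cvgr_to_ge u0); apply: nearW.
Qed.

Section Neumann.
Variable y : A.
Hypothesis y_lt1 : nrm y < 1.

Let S n := \sum_(i < n) y ^+ i.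
Let r := nrm y.
Let r_ge0 : 0 <= r := nrm_ge0 y.
Let r1_gt0 : 0 < 1 - r. Proof. by rewrite subr_gt0. Qed.

Let S_mul_subr1 n : S n * (1 - y) = 1 - y ^+ n.
Proof.
have -> : S n * (1 - y) = (1 - y) * S n.
  apply/esym/commr_sum => i _; apply/commr_sym/commrB; first exact: commr1.
  exact/commr_sym/commrX/commr_refl.
exact: subr1_mul_sumX.
Qed.

Let nrm_S_sub_le n m : (n <= m)%N -> nrm (S m - S n) <= r ^+ n / (1 - r).
Proof.
move=> nm; rewrite /S -!(big_mkord xpredT) (big_cat_nat (leq0n n) nm) /=.
rewrite addrC addrK; apply: le_trans (nrm_sum_le _ _ _) _.
apply: le_trans (geometric_tail_le n m r_ge0 y_lt1).
by apply: ler_sum => i _; exact: nrm_expr_le.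
Qed.

Let S_cauchy (e : R) : 0 < e -> exists N : nat, forall m n : nat,
  (N <= m)%N -> (N <= n)%N -> nrm (S m - S n) < e.
Proof.
move=> e_gt0; have r_lt1 : `|r| < 1 by rewrite ger0_norm.
have /cvgrPdist_lt/(_ (e * (1 - r)) (mulr_gt0 e_gt0 r1_gt0)) := cvg_expr r_lt1.
move=> [N _ rN]; exists N.
suff S_lt m n : (N <= n)%N -> (n <= m)%N -> nrm (S m - S n) < e.
  move=> m n Nm Nn; case: (leqP n m) => [nm|/ltnW mn]; first exact: S_lt.
  by rewrite nrm_distC; exact: S_lt.
move=> Nn nm; apply: (le_lt_trans (nrm_S_sub_le nm)).
have := rN n Nn; rewrite sub0r normrN ger0_norm ?exprn_ge0 //.
by rewrite ltr_pdivrMr.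
Qed.

Lemma neumann_series : exists z,
  [/\ (1 - y) * z = 1, z * (1 - y) = 1 & nrm z <= (1 - nrm y)^-1].
Proof.
have [z Sz] := cs_complete HA S_cauchy.
have Sz0 : (fun n => nrm (S n - z)) @ \oo --> 0.
  apply/cvgrPdist_lt => e e_gt0; have [N SzN] := Sz e e_gt0.
  exists N => // n Nn /=; rewrite sub0r normrN ger0_norm ?nrm_ge0 //; exact: SzN.
have r_lt1 : `|r| < 1 by rewrite ger0_norm.
pose u n := nrm (1 - y) * nrm (S n - z) + r ^+ n.
have u0 : u @ \oo --> 0.
  have := cvgD (cvgM (cvg_cst (nrm (1 - y))) Sz0) (cvg_expr r_lt1).
  by rewrite mulr0 addr0; apply.
exists z; split.
- apply/subr0_eq/(eq0_nrm_vanishing u0) => n.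
  have -> : (1 - y) * z - 1 = (1 - y) * (z - S n) - y ^+ n.
    by rewrite mulrBr subr1_mul_sumX opprB addrA addrAC addrK.
  apply: (le_trans (nrm_sub_le _ _)); apply: lerD; last exact: nrm_expr_le.
  by rewrite (nrm_distC (S n)); exact: nrm_submul.
- apply/subr0_eq/(eq0_nrm_vanishing u0) => n.
  have -> : z * (1 - y) - 1 = (z - S n) * (1 - y) - y ^+ n.
    by rewrite mulrBl S_mul_subr1 opprB addrA addrAC addrK.
  apply: (le_trans (nrm_sub_le _ _)); apply: lerD; last exact: nrm_expr_le.
  by rewrite mulrC (nrm_distC (S n)); exact: nrm_submul.
- have bound_cvg : (fun n => (1 - r)^-1 + nrm (S n - z)) @ \oo --> (1 - r)^-1.
    by have := cvgD (cvg_cst (1 - r)^-1) Sz0; rewrite addr0; apply.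
  apply: (cvgr_to_ge bound_cvg); apply: nearW => n.
  have -> : nrm z = nrm (S n - (S n - z)) by rewrite subKr.
  apply: (le_trans (nrm_sub_le _ _)); apply: lerD => //.
  have := nrm_S_sub_le (leq0n n); rewrite expr0 div1r.
  by rewrite /S big_ord0 subr0.
Qed.

End Neumann.

Lemma neumann_inverse x : nrm x < 1 ->
  exists z, [/\ (1 + x) * z = 1, z * (1 + x) = 1 & nrm z <= (1 - nrm x)^-1].
Proof. by rewrite -nrmN => /neumann_series; rewrite opprK nrmN. Qed.

Lemma nrm_proj_subr_le1 p : is_proj st p -> nrm (1 - p) <= 1.
Proof. by move/projC/nrm_proj_le1. Qed.

Lemma nrm_sandwich_le P Q c : nrm P <= 1 -> nrm Q <= 1 -> nrm (Q * c * P) <= nrm c.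
Proof.
move=> P_le1 Q_le1; apply: (le_trans (nrm_submul _ _)).
rewrite -[X in _ <= X]mulr1 ler_pM ?nrm_ge0 //.
by apply: (le_trans (nrm_submul _ _)); rewrite ler_piMl ?nrm_ge0.
Qed.

Lemma pq_inverse_perturb p q a b c :
  is_proj st p -> is_proj st q -> pq_inverse p q a b -> nrm b * nrm c < 1 ->
  exists b1, pq_inverse p q (a + c) b1 /\ nrm b1 <= nrm b / (1 - nrm b * nrm c).
Proof.
move=> p_proj q_proj ab bc_lt1; move: ab; rewrite /pq_inverse.
have PP := idem_subr p_proj.2; have QQ := idem_subr q_proj.2.
have P_le1 := nrm_proj_subr_le1 p_proj; have Q_le1 := nrm_proj_subr_le1 q_proj.
move: (1 - p) (1 - q) PP QQ P_le1 Q_le1 => P Q PP QQ P_le1 Q_le1 [b_eq ab_r ab_l].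
have Pb : P * b = b by rewrite b_eq !mulrA PP.
have bQ : b * Q = b by rewrite b_eq -!mulrA QQ.
set c' := Q * c * P.
have c'_le : nrm c' <= nrm c by exact: nrm_sandwich_le.
have bc'_le : nrm (b * c') <= nrm b * nrm c.
  by apply: (le_trans (nrm_submul _ _)); exact: ler_wpM2l.
have c'b_le : nrm (c' * b) <= nrm b * nrm c.
  by apply: (le_trans (nrm_submul _ _)); rewrite mulrC; exact: ler_wpM2l.
have [N [N_r N_l N_le]] := neumann_inverse (le_lt_trans bc'_le bc_lt1).
have [N' [N'_r _ _]] := neumann_inverse (le_lt_trans c'b_le bc_lt1).
have NbN' : N * b = b * N' := push_through N_l N'_r.
have Qc' : Q * c' = c' by rewrite /c' !mulrA QQ.
have c'P : c' * P = c' by rewrite /c' -mulrA PP.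
exists (N * b); split; first split.
- by rewrite -[P * _ * Q]mulrA -[N * b * Q]mulrA bQ NbN' mulrA Pb.
- have e : Q * (a + c) * P * b = Q * (1 + c' * b).
    by rewrite mulrDr !mulrDl ab_r [RHS]mulrDr mulr1 mulrA Qc'.
  by rewrite NbN' mulrA e -mulrA N'_r mulr1.
- have e : b * Q * (a + c) * P = (1 + b * c') * P.
    by rewrite mulrDr !mulrDl ab_l mul1r -[b * c' * P]mulrA c'P /c' !mulrA.
  by rewrite -(mulrA N) -(mulrA N) -(mulrA N) e mulrA N_l mul1r.
- apply: (le_trans (nrm_submul _ _)); rewrite mulrC ler_wpM2l ?nrm_ge0 //.
  apply: (le_trans N_le).
  rewrite lef_pV2 ?posrE ?subr_gt0 ?(le_lt_trans bc'_le bc_lt1) //.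
  by rewrite lerD2l lerN2.
Qed.

Lemma nrm_proj_intertwiner_subr1 p p' :
  is_proj st p -> nrm (proj_intertwiner p p' - 1) <= 2 * nrm (p - p').
Proof.
move=> p_proj; rewrite proj_intertwiner_subr1; last exact: p_proj.2.
have le1 : nrm ((1 - p) * (p - p')) <= nrm (p - p').
  by apply: (le_trans (nrm_submul _ _)); rewrite ler_piMl ?nrm_ge0 ?nrm_proj_subr_le1.
have le2 : nrm (p * (p' - p)) <= nrm (p - p').
  apply: (le_trans (nrm_submul _ _)).
  by rewrite nrm_distC ler_piMl ?nrm_ge0 ?nrm_proj_le1.
by apply: (le_trans (nrm_triangle _ _)); lra.
Qed.

Lemma proj_similarity p p' :
  is_proj st p -> is_proj st p' -> 2 * nrm (p - p') < 1 ->
  exists Z W, [/\ Z * (1 - p') = (1 - p) * Z, W * Z = 1, Z * W = 1,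
    nrm (Z - 1) <= 2 * nrm (p - p') & nrm W <= (1 - nrm (Z - 1))^-1].
Proof.
move=> p_proj p'_proj d_lt.
have Z_le := nrm_proj_intertwiner_subr1 p' p_proj.
have [W [ZW WZ W_le]] := neumann_inverse (le_lt_trans Z_le d_lt).
rewrite addrC subrK in ZW WZ.
exists (proj_intertwiner p p'), W; split => //.
exact: proj_intertwinerC p_proj.2 p'_proj.2.
Qed.

Lemma nrm_pq_inverse_le p q a b : is_proj st p -> is_proj st q ->
  pq_inverse p q a b -> nrm b <= nrm a * nrm b ^+ 2.
Proof.
move=> p_proj q_proj ab.
rewrite -{1}(pq_inverse_outer p_proj.2 q_proj.2 ab).
apply: (le_trans (nrm_submul _ _)); apply: le_trans (ler_wpM2r (nrm_ge0 b) (nrm_submul _ _)) _.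
by rewrite expr2 mulrCA mulrA.
Qed.

Lemma pq_inverse_proj_perturb p q p' q' a b :
  is_proj st p -> is_proj st q -> is_proj st p' -> is_proj st q' ->
  pq_inverse p q a b -> 2 * nrm (p - p') < 1 -> 2 * nrm (q - q') < 1 ->
  14 * (nrm a * nrm b) * nrm (p - p') < 1 -> 14 * (nrm a * nrm b) * nrm (q - q') < 1 ->
  exists b', pq_inverse p' q' a b' /\ nrm b' <= 2 * nrm b.
Proof.
move=> p_proj q_proj p'_proj q'_proj ab dp_lt dq_lt dp_small dq_small.
have [Zp [Wp [Zp_int WZp ZWp x1_le Wp_le]]] := proj_similarity p_proj p'_proj dp_lt.
have [Zq [Wq [Zq_int WZq _ x2_le _]]] := proj_similarity q_proj q'_proj dq_lt.
have eta_ge0 : 0 <= nrm a * nrm b by rewrite mulr_ge0 ?nrm_ge0.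
have small x d : x <= 2 * d -> 14 * (nrm a * nrm b) * d < 1 ->
    7 * (nrm a * nrm b) * x < 1 by nra.
set c := Zq * a * Wp - a.
have c_le : nrm c <= nrm a * (nrm (Zp - 1) + nrm (Zq - 1)) * nrm Wp.
  have -> : c = (Zq - 1) * a * Wp - a * ((Zp - 1) * Wp).
    rewrite (mulrBl Wp Zp 1) ZWp mul1r mulrBr mulr1 (mulrBl a Zq 1) mul1r mulrBl.
    by rewrite opprB addrA subrK.
  apply: (le_trans (nrm_sub_le _ _)).
  have le1 : nrm ((Zq - 1) * a * Wp) <= nrm (Zq - 1) * nrm a * nrm Wp.
    by apply: (le_trans (nrm_submul _ _)); rewrite ler_wpM2r ?nrm_ge0 ?nrm_submul.
  have le2 : nrm (a * ((Zp - 1) * Wp)) <= nrm a * (nrm (Zp - 1) * nrm Wp).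
    by apply: (le_trans (nrm_submul _ _)); rewrite ler_wpM2l ?nrm_ge0 ?nrm_submul.
  have -> : nrm a * (nrm (Zp - 1) + nrm (Zq - 1)) * nrm Wp
      = nrm (Zq - 1) * nrm a * nrm Wp + nrm a * (nrm (Zp - 1) * nrm Wp) by ring.
  exact: lerD.
have Zq_le : nrm Zq <= 1 + nrm (Zq - 1).
  have -> : nrm Zq = nrm ((Zq - 1) + 1) by rewrite subrK.
  by apply: (le_trans (nrm_triangle _ _)); rewrite [_ + nrm 1]addrC lerD2r nrm1_le1.
have [bc_lt1 b'_le] := similarity_estimate (nrm_ge0 b)
  (nrm_pq_inverse_le p_proj q_proj ab) (nrm_ge0 _) (nrm_ge0 _)
  (le_lt_trans x1_le dp_lt) (small _ _ x1_le dp_small) (small _ _ x2_le dq_small)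
  (nrm_ge0 Wp) Wp_le Zq_le c_le.
have [b1 [ab1 b1_le]] := pq_inverse_perturb p_proj q_proj ab bc_lt1.
rewrite /c addrC subrK in ab1.
exists (Wp * b1 * Zq); split; first exact: pq_inverse_conj WZp ZWp WZq Zp_int Zq_int ab1.
apply: le_trans b'_le; apply: (le_trans (nrm_submul _ _)).
rewrite ler_wpM2r ?nrm_ge0 //; apply: (le_trans (nrm_submul _ _)).
by rewrite ler_wpM2l ?nrm_ge0.
Qed.

Lemma invertible_upto_le p q a (B : R) : p * p = p -> q * q = q ->
  (exists b, pq_inverse p q a b /\ nrm b <= B) ->
  invertible_upto p q a /\ (forall b, pq_inverse p q a b -> nrm b <= B).
Proof.
move=> pp qq [b [ab b_le]]; split; first by exists b.
by move=> b' ab'; rewrite -(pq_inverse_unique pp qq ab ab').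
Qed.

End CstarAlgebra.

Theorem mainTheorem8 (R : realType) (A : algType R[i]) (nrm : A -> R) (st : A -> A)
  (HA : is_Cstar nrm st) (p q a b : A)
  (Hp : is_proj st p) (Hq : is_proj st q) (Hab : pq_inverse p q a b) :
  (* (a) *)
  (forall c : A, nrm b * nrm c < 1 ->
     invertible_upto p q (a + c) /\
     (forall b1 : A, pq_inverse p q (a + c) b1 ->
        nrm b1 <= nrm b / (1 - nrm b * nrm c)))
  /\
  (* (b) *)
  (forall p' q' : A, is_proj st p' -> is_proj st q' ->
     nrm (p - p') < 1 / 2 -> 4 * Cconst R * nrm a * nrm b * nrm (p - p') < 1 ->
     nrm (q - q') < 1 / 2 -> 4 * Cconst R * nrm a * nrm b * nrm (q - q') < 1 ->
     invertible_upto p' q' a /\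
     (forall b' : A, pq_inverse p' q' a b' -> nrm b' <= 2 * nrm b)).
Proof.
split=> [c bc_lt1 | p' q' Hp' Hq' dp_half dp_C dq_half dq_C].
  apply: (invertible_upto_le Hp.2 Hq.2).
  have [b1 [ab1 b1_le]] := pq_inverse_perturb HA Hp Hq Hab bc_lt1.
  by exists b1.
apply: (invertible_upto_le Hp'.2 Hq'.2).
have eta_ge0 : 0 <= nrm a * nrm b by rewrite mulr_ge0 ?(cs_norm_ge0 HA).
have small d : 0 <= d -> 4 * Cconst R * nrm a * nrm b * d < 1 ->
    14 * (nrm a * nrm b) * d < 1.
  by move=> d_ge0; have := Cconst_ge R; have := mulr_ge0 eta_ge0 d_ge0; nra.
apply: (pq_inverse_proj_perturb HA Hp Hq Hp' Hq' Hab); [lra | lra | |].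
  exact: small (cs_norm_ge0 HA _) dp_C.
exact: small (cs_norm_ge0 HA _) dq_C.
Qed.
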